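(* Let $T,\widehat T\in\mathbb R^{d\times k}$ with $T$ of full column rank. Let $q,p,\widehat q,\widehat p\in\mathbb R^d$ and let $\theta\in\mathbb R^k$ satisfy $T\theta=q-p$ and $\|\theta\|\le\theta_{\max}$. Let $\Delta_T,\Delta_p,\Delta_q\ge0$ satisfy $\|\widehat T-T\|\le\Delta_T$, $\|\widehat p-p\|\le\Delta_p$, $\|\widehat q-q\|\le\Delta_q$. If $\widehat\theta$ is any minimizer over $\theta'\in\mathbb R^k$ of $$\|\widehat T\theta'-\widehat q+\widehat p\|+\Delta_T\|\theta'\|,$$ then $$\|\widehat\theta-\theta\|\le 2\|T^\dagger\|\big(\Delta_q+\Delta_p+\theta_{\max}\Delta_T\big).$$
   Context: Vector norms are Euclidean norms and matrix norms are spectral (operator) norms. $T^\dagger$ denotes the Moore–Penrose pseudoinverse; for full-column-rank $T$, $\|T^\dagger\|$ is the inverse of the smallest singular value of $T$. *)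

From HB Require Import structures.
From mathcomp Require Import all_boot all_order all_algebra.
From mathcomp Require Import classical_sets reals.
Set Implicit Arguments. Unset Strict Implicit. Unset Printing Implicit Defensive.
Import Order.TTheory GRing.Theory Num.Theory.
Local Open Scope ring_scope.
Local Open Scope classical_set_scope.

Definition vnorm (R : realType) (n : nat) (x : 'cV[R]_n) : R :=
  Num.sqrt (\sum_(i < n) x i ord0 ^+ 2).

Definition opnorm (R : realType) (m n : nat) (A : 'M[R]_(m, n)) : R :=
  sup [set vnorm (A *m x) | x in [set x : 'cV[R]_n | vnorm x <= 1]].

(* Moore-Penrose pseudoinverse of a full-column-rank matrix:
   T^dagger = (T^T T)^{-1} T^T  (valid when \rank T = n). *)
Definition pinv_fullcol (R : realType) (m n : nat) (A : 'M[R]_(m, n))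
  : 'M[R]_(n, m) := invmx (A^T *m A) *m A^T.

From HB Require Import structures.
From mathcomp Require Import all_boot all_order all_algebra.
From mathcomp Require Import classical_sets reals.
From mathcomp Require Import ring lra.
Import Order.TTheory GRing.Theory Num.Theory.
Set Implicit Arguments. Unset Strict Implicit.
Local Open Scope ring_scope.

(* Write [r θ' = T̂ θ' - q̂ + p̂] for the perturbed residual.  Since
   [r θ' - (T θ' - (q - p)) = (T̂ - T) θ' - (q̂ - q) + (p̂ - p)], the perturbed
   residual differs from the true one by at most [Δ_T ‖θ'‖ + Δ_q + Δ_p].
   At θ' = θ the true residual vanishes, so the objective value at θ is at
   most [2 Δ_T ‖θ‖ + Δ_q + Δ_p]; at θ' = θ̂ the true residual is [T (θ̂ - θ)],
   so ‖T (θ̂ - θ)‖ is at most the objective value at θ̂ plus [Δ_q + Δ_p].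
   Minimality of θ̂ and ‖θ‖ <= θ_max give ‖T (θ̂ - θ)‖ <= 2 (Δ_q + Δ_p +
   θ_max Δ_T), and [T^† T = 1] turns this into the bound on ‖θ̂ - θ‖. *)

Section EuclideanNorm.
Variable R : realType.

(* Cauchy–Schwarz for finite sums, via Lagrange's identity. *)
Lemma cauchy_schwarz n (f g : 'I_n -> R) :
  (\sum_i f i * g i) ^+ 2 <= (\sum_i f i ^+ 2) * (\sum_i g i ^+ 2).
Proof.
have lagrange_ge0 : 0 <= \sum_i \sum_j (f i * g j - f j * g i) ^+ 2.
  by apply: sumr_ge0 => i _; apply: sumr_ge0 => j _; exact: sqr_ge0.
have lagrange : (\sum_i \sum_j f i ^+ 2 * g j ^+ 2)
    + (\sum_i \sum_j f j ^+ 2 * g i ^+ 2)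
    - 2 * \sum_i \sum_j (f i * g i) * (f j * g j)
  = \sum_i \sum_j (f i * g j - f j * g i) ^+ 2.
  rewrite mulr_sumr -big_split -sumrB /=; apply: eq_bigr => i _.
  rewrite mulr_sumr -big_split -sumrB /=; apply: eq_bigr => j _.
  ring.
have prod_sq : \sum_i \sum_j f i ^+ 2 * g j ^+ 2
    = (\sum_i f i ^+ 2) * (\sum_i g i ^+ 2).
  by rewrite mulr_suml; apply: eq_bigr => i _; rewrite mulr_sumr.
have sq_dot : \sum_i \sum_j (f i * g i) * (f j * g j) = (\sum_i f i * g i) ^+ 2.
  by rewrite expr2 mulr_suml; apply: eq_bigr => i _; rewrite mulr_sumr.
move: lagrange_ge0.
rewrite -lagrange (exchange_big _ _ _ _ _ (fun i j => f j ^+ 2 * g i ^+ 2)) /=.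
rewrite prod_sq sq_dot; lra.
Qed.

Lemma le_of_sqr_le (a b : R) : 0 <= b -> a ^+ 2 <= b ^+ 2 -> a <= b.
Proof. by move=> b_ge0 ab; nra. Qed.

Lemma vnorm_ge0 n (x : 'cV[R]_n) : 0 <= vnorm x.
Proof. exact: sqrtr_ge0. Qed.

Lemma vnorm_sqr n (x : 'cV[R]_n) : vnorm x ^+ 2 = \sum_i x i ord0 ^+ 2.
Proof. by rewrite sqr_sqrtr //; apply: sumr_ge0 => i _; exact: sqr_ge0. Qed.

Lemma vnorm0 n : vnorm (0 : 'cV[R]_n) = 0.
Proof. by rewrite /vnorm big1 ?sqrtr0 // => i _; rewrite mxE expr0n. Qed.

Lemma vnorm_eq0 n (x : 'cV[R]_n) : vnorm x = 0 -> x = 0.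
Proof.
move=> /eqP; rewrite sqrtr_eq0 => sum_le0.
have sum0 : \sum_i x i ord0 ^+ 2 = 0.
  by apply/eqP; rewrite eq_le sum_le0 sumr_ge0 // => i _; exact: sqr_ge0.
apply/matrixP => i j; rewrite (ord1 j) mxE.
apply/eqP; rewrite -sqrf_eq0; apply/eqP.
exact: (psumr_eq0P (fun i _ => sqr_ge0 (x i ord0)) sum0).
Qed.

Lemma vnormZ n (a : R) (x : 'cV[R]_n) : vnorm (a *: x) = `|a| * vnorm x.
Proof.
rewrite /vnorm -sqrtr_sqr -sqrtrM ?sqr_ge0 // mulr_sumr.
by congr Num.sqrt; apply: eq_bigr => i _; rewrite mxE; ring.
Qed.

Lemma vnormN n (x : 'cV[R]_n) : vnorm (- x) = vnorm x.
Proof. by rewrite -scaleN1r vnormZ normrN normr1 mul1r. Qed.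

(* Triangle inequality, from Cauchy–Schwarz. *)
Lemma vnormD n (x y : 'cV[R]_n) : vnorm (x + y) <= vnorm x + vnorm y.
Proof.
apply: le_of_sqr_le; first by rewrite addr_ge0 // vnorm_ge0.
have dot_le : \sum_i x i ord0 * y i ord0 <= vnorm x * vnorm y.
  apply: le_of_sqr_le; first by rewrite mulr_ge0 // vnorm_ge0.
  by rewrite exprMn !vnorm_sqr; exact: cauchy_schwarz.
have -> : vnorm (x + y) ^+ 2 =
    vnorm x ^+ 2 + 2 * \sum_i x i ord0 * y i ord0 + vnorm y ^+ 2.
  rewrite !vnorm_sqr mulr_sumr -!big_split /=; apply: eq_bigr => i _.
  by rewrite mxE; ring.
lra.
Qed.

Lemma vnormB n (x y : 'cV[R]_n) : vnorm (x - y) <= vnorm x + vnorm y.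
Proof. by rewrite -(vnormN y) vnormD. Qed.

Lemma vnorm_le_dist n (x y : 'cV[R]_n) : vnorm x <= vnorm y + vnorm (x - y).
Proof. by have := vnormD y (x - y); rewrite addrC subrK. Qed.

End EuclideanNorm.

Section OperatorNorm.
Variable R : realType.

(* The Frobenius norm bounds the action of a matrix (row-wise Cauchy–Schwarz);
   this makes the set in the definition of [opnorm] bounded. *)
Lemma vnorm_mul_le_frobenius m n (A : 'M[R]_(m, n)) (x : 'cV[R]_n) :
  vnorm (A *m x) <= Num.sqrt (\sum_i \sum_j A i j ^+ 2) * vnorm x.
Proof.
apply: le_of_sqr_le; first by rewrite mulr_ge0 ?sqrtr_ge0 ?vnorm_ge0.
have frob_ge0 : 0 <= \sum_i \sum_j A i j ^+ 2.
  by apply: sumr_ge0 => i _; apply: sumr_ge0 => j _; exact: sqr_ge0.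
rewrite exprMn (sqr_sqrtr frob_ge0).
rewrite !vnorm_sqr mulr_suml; apply: ler_sum => i _.
by rewrite mxE; exact: (cauchy_schwarz (fun j => A i j) (fun j => x j ord0)).
Qed.

Lemma opnorm_has_ubound m n (A : 'M[R]_(m, n)) :
  has_ubound [set vnorm (A *m x) | x in [set x : 'cV[R]_n | vnorm x <= 1]].
Proof.
exists (Num.sqrt (\sum_i \sum_j A i j ^+ 2)) => _ [x x_le1 <-].
apply: le_trans (vnorm_mul_le_frobenius A x) _.
by rewrite ler_piMr ?sqrtr_ge0.
Qed.

Lemma opnorm_ge0 m n (A : 'M[R]_(m, n)) : 0 <= opnorm A.
Proof.
apply: (ub_le_sup (opnorm_has_ubound A)).
by exists 0; rewrite /= ?mulmx0 vnorm0.
Qed.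

Lemma opnorm_mul_le m n (A : 'M[R]_(m, n)) (x : 'cV[R]_n) :
  vnorm (A *m x) <= opnorm A * vnorm x.
Proof.
have [x0 | xn0] := eqVneq (vnorm x) 0.
  by rewrite x0 mulr0 (vnorm_eq0 x0) mulmx0 vnorm0.
have x_gt0 : 0 < vnorm x by rewrite lt_def xn0 vnorm_ge0.
have unit_x : vnorm ((vnorm x)^-1 *: x) <= 1.
  by rewrite vnormZ ger0_norm ?invr_ge0 ?vnorm_ge0 // mulVf.
have := ub_le_sup (opnorm_has_ubound A) (ex_intro2 _ _ ((vnorm x)^-1 *: x) unit_x erefl).
rewrite -scalemxAr !vnormZ ger0_norm ?invr_ge0 ?vnorm_ge0 // => le_sup.
by rewrite -ler_pdivrMr // mulrC.
Qed.

Lemma opnorm_mul_le_bound m n (A : 'M[R]_(m, n)) (D : R) (x : 'cV[R]_n) :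
  opnorm A <= D -> vnorm (A *m x) <= D * vnorm x.
Proof.
move=> A_le; apply: le_trans (opnorm_mul_le A x) _.
by apply: ler_wpM2r => //; exact: vnorm_ge0.
Qed.

End OperatorNorm.

Lemma row_self_dot_eq0 (R : realType) d (w : 'rV[R]_d) : w *m w^T = 0 -> w = 0.
Proof.
move=> /(congr1 (fun M : 'M[R]_1 => M ord0 ord0)); rewrite !mxE => dot0.
have sum0 : \sum_j w ord0 j ^+ 2 = 0.
  by apply: etrans dot0; apply: eq_bigr => j _; rewrite mxE expr2.
apply/rowP => j; rewrite mxE.
apply/eqP; rewrite -sqrf_eq0; apply/eqP.
exact: (psumr_eq0P (fun j _ => sqr_ge0 (w ord0 j)) sum0).
Qed.

(* For full column rank, the Gram matrix [T^T T] is invertible, hence the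
   pseudoinverse is a left inverse of [T]. *)
Lemma pinv_fullcolK (R : realType) d k (T : 'M[R]_(d, k)) :
  \rank T = k -> pinv_fullcol T *m T = 1%:M.
Proof.
move=> rankT; rewrite /pinv_fullcol -mulmxA mulVmx // -row_free_unit.
apply: inj_row_free => v vG0.
have vTt0 : v *m T^T = 0.
  apply: row_self_dot_eq0.
  by rewrite trmx_mul trmxK mulmxA -(mulmxA v) vG0 mul0mx.
have freeTt : row_free T^T by rewrite /row_free mxrank_tr rankT.
by apply/eqP; rewrite -(mulmx_free_eq0 _ freeTt) vTt0.
Qed.

Lemma vnorm_le_pinv (R : realType) d k (T : 'M[R]_(d, k)) (x : 'cV[R]_k) :
  \rank T = k -> vnorm x <= opnorm (pinv_fullcol T) * vnorm (T *m x).
Proof.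
move=> rankT; rewrite -{1}(mul1mx x) -(pinv_fullcolK rankT) -mulmxA.
exact: opnorm_mul_le.
Qed.

Lemma residual_perturbation (R : realType) d k (T That : 'M[R]_(d, k))
    (q p qh ph : 'cV[R]_d) (DT Dp Dq : R) (theta' : 'cV[R]_k) :
  opnorm (That - T) <= DT -> vnorm (ph - p) <= Dp -> vnorm (qh - q) <= Dq ->
  vnorm ((That *m theta' - qh + ph) - (T *m theta' - (q - p)))
    <= DT * vnorm theta' + Dq + Dp.
Proof.
move=> T_le p_le q_le.
have -> : (That *m theta' - qh + ph) - (T *m theta' - (q - p))
    = (That - T) *m theta' - (qh - q) + (ph - p).
  rewrite mulmxBl; move: (That *m theta') (T *m theta') => a b.
  by apply/matrixP => i j; rewrite !mxE; ring.
apply: le_trans (vnormD _ _) _; apply: lerD => //.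
apply: le_trans (vnormB _ _) _; apply: lerD => //.
exact: opnorm_mul_le_bound.
Qed.

Theorem lemma3 (R : realType) (d k : nat)
  (T That : 'M[R]_(d, k)) (q p qh ph : 'cV[R]_d) (theta : 'cV[R]_k)
  (theta_max DT Dp Dq : R) (thetah : 'cV[R]_k) :
  \rank T = k ->
  T *m theta = q - p ->
  vnorm theta <= theta_max ->
  0 <= DT -> 0 <= Dp -> 0 <= Dq ->
  opnorm (That - T) <= DT ->
  vnorm (ph - p) <= Dp ->
  vnorm (qh - q) <= Dq ->
  (forall theta' : 'cV[R]_k,
     vnorm (That *m thetah - qh + ph) + DT * vnorm thetah
     <= vnorm (That *m theta' - qh + ph) + DT * vnorm theta') ->
  vnorm (thetah - theta)
  <= 2 * opnorm (pinv_fullcol T) * (Dq + Dp + theta_max * DT).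
Proof.
move=> rankT Ttheta theta_le DT_ge0 _ _ T_le p_le q_le thetah_min.
have pert theta' := residual_perturbation theta' T_le p_le q_le.
(* At θ the true residual vanishes; at θ̂ it equals T (θ̂ - θ). *)
have obj_theta : vnorm (That *m theta - qh + ph) <= DT * vnorm theta + Dq + Dp.
  by move: (pert theta); rewrite Ttheta subrr subr0.
have err_thetah : vnorm (T *m (thetah - theta))
    <= vnorm (That *m thetah - qh + ph) + (DT * vnorm thetah + Dq + Dp).
  rewrite mulmxBr Ttheta.
  apply: le_trans (vnorm_le_dist _ (That *m thetah - qh + ph)) _.
  by apply: lerD => //; rewrite -vnormN opprB; exact: pert.
have DT_theta : DT * vnorm theta <= DT * theta_max by apply: ler_wpM2l.
have err_le : vnorm (T *m (thetah - theta)) <= 2 * (Dq + Dp + theta_max * DT).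
  by have := thetah_min theta; lra.
apply: le_trans (vnorm_le_pinv _ rankT) _.
by rewrite -mulrA mulrCA; apply: ler_wpM2l => //; exact: opnorm_ge0.
Qed.
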